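(* Let $A$ be a finite skew brace such that $\Lambda(A)$ has exactly one vertex and $\ker\lambda\cap\operatorname{Fix}(A)=\{0\}$. Then $(\operatorname{Fix}(A),+)$ is an abelian group of odd order, $\operatorname{Fix}(A)$ is a trivial skew brace, and $A$ is isomorphic to the skew brace on $\operatorname{Fix}(A)\times\mathbb{Z}/2\mathbb{Z}$ with operations \[(f_1,k_1)+(f_2,k_2)=\big(f_1+(-1)^{k_1}f_2,\,k_1+k_2\big),\qquad (f_1,k_1)\circ(f_2,k_2)=\big((-1)^{k_2}f_1+(-1)^{k_1}f_2,\,k_1+k_2\big).\] Conversely, if $F$ is a non-trivial abelian group of odd order, then $A=F\times\mathbb{Z}/2\mathbb{Z}$ with these operations is a skew brace with $\operatorname{Fix}(A)=F\times\{0\}$, $\ker\lambda=\{0\}\times\mathbb{Z}/2\mathbb{Z}$, and $\Lambda(A)$ has exactly one vertex.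
   Context: A skew brace is a triple $(A,+,\circ)$ where $(A,+)$ and $(A,\circ)$ are groups with $a\circ(b+c)=a\circ b-a+a\circ c$. $\lambda_a(b)=-a+a\circ b$ gives a homomorphism $\lambda\colon(A,\circ)\to\operatorname{Aut}(A,+)$ with kernel $\ker\lambda$. $\operatorname{Fix}(A)=\{a\in A:\lambda_x(a)=a\ \forall x\in A\}$. A trivial skew brace is one with $a+b=a\circ b$ for all $a,b$. $\Lambda(A)$ is the graph whose vertices are the $\lambda$-orbits of size $>1$, two distinct vertices $L_1,L_2$ adjacent iff $\gcd(|L_1|,|L_2|)\ne1$. *)

From HB Require Import structures.
From mathcomp Require Import all_boot all_order all_algebra.
Set Implicit Arguments. Unset Strict Implicit. Unset Printing Implicit Defensive.

Record skewBrace (T : Type) := SkewBrace {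
  sb_add : T -> T -> T;
  sb_opp : T -> T;
  sb_zero : T;
  sb_circ : T -> T -> T;
  sb_cinv : T -> T;
  sb_one : T;
  sb_addA : forall a b c, sb_add a (sb_add b c) = sb_add (sb_add a b) c;
  sb_add0 : forall a, sb_add sb_zero a = a;
  sb_addN : forall a, sb_add (sb_opp a) a = sb_zero;
  sb_circA : forall a b c, sb_circ a (sb_circ b c) = sb_circ (sb_circ a b) c;
  sb_circ1 : forall a, sb_circ sb_one a = a;
  sb_circV : forall a, sb_circ (sb_cinv a) a = sb_one;
  sb_dist : forall a b c,
    sb_circ a (sb_add b c) = sb_add (sb_add (sb_circ a b) (sb_opp a)) (sb_circ a c)
}.

Section SkewBraceDefs.
Variables (T : finType) (B : skewBrace T).

Definition sb_lambda (a b : T) : T := sb_add B (sb_opp B a) (sb_circ B a b).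

Definition sb_ker : {set T} := [set a | [forall b, sb_lambda a b == b]].

Definition sb_Fix : {set T} := [set a | [forall x, sb_lambda x a == a]].

Definition lambda_orbit (a : T) : {set T} := [set sb_lambda x a | x : T].

Definition Lambda_vertices : {set {set T}} :=
  [set O in [set lambda_orbit a | a : T] | 1 < #|O|].

End SkewBraceDefs.

(* The operations on F x Z/2Z (Z/2Z represented by bool, addition = xor,
   (-1)^k f = if k then -f else f):
   (f1,k1)+(f2,k2) = (f1 + (-1)^k1 f2, k1+k2)
   (f1,k1)o(f2,k2) = ((-1)^k2 f1 + (-1)^k1 f2, k1+k2) *)
Definition sgn_act (T : Type) (opp : T -> T) (k : bool) (f : T) : T :=
  if k then opp f else f.

Definition sd_add (T : Type) (add : T -> T -> T) (opp : T -> T)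
    (x y : T * bool) : T * bool :=
  (add x.1 (sgn_act opp x.2 y.1), x.2 (+) y.2).

Definition sd_circ (T : Type) (add : T -> T -> T) (opp : T -> T)
    (x y : T * bool) : T * bool :=
  (add (sgn_act opp y.2 x.1) (sgn_act opp x.2 y.1), x.2 (+) y.2).

(* Since Lambda(A) has a single vertex, the complement of Fix(A) is one lambda-orbit,
   and the orbit-stabiliser theorem forces Fix(A) to have index 2 in (A,+).  For
   a fixed a outside Fix(A), the map x |-> -a + lambda_x(a) is then a surjective
   homomorphism (A,o) -> (Fix(A),+); applying lambda_x to a + a, which lies in
   Fix(A), shows that conjugation by a inverts Fix(A), so Fix(A) is abelian.
   Triviality of ker lambda on Fix(A) makes this homomorphism injective on
   Fix(A), where it is doubling; hence Fix(A) has no element of order 2 and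
   a + a = 0.  With a base point e outside Fix(A) satisfying lambda_e(e) = e,
   the coordinates f |-> (f,0) and f + e |-> (f,1) give the isomorphism.  In the
   converse direction lambda_(y,k) moves (x,1) to (x - 2y, 1) or (x + 2y, 1), and
   halving in the odd group F makes the elements (x,1) a single orbit. *)

From HB Require Import structures.
From mathcomp Require Import all_boot all_order all_algebra fingroup cyclic.
Import GRing.Theory.
Set Implicit Arguments. Unset Strict Implicit. Unset Printing Implicit Defensive.

Lemma odd_card_involution (T : finType) (g : T -> T) (S : {set T}) :
  involutive g -> {in S, forall x, g x \in S} ->
  odd #|S| = odd #|[set x in S | g x == x]|.
Proof.
move=> gK; elim: {S}_.+1 {-2}S (ltnSn #|S|) => // n IH S ltSn gS.
have [y /andP[Sy gyy] | allfix] := pickP [pred y in S | g y != y]; last first.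
  congr odd; apply: eq_card => x; rewrite inE.
  case Sx: (x \in S) => //=; apply/esym/negbFE.
  by have /= := allfix x; rewrite Sx.
set S' := S :\: [set y; g y].
have cardS : #|S| = #|S'|.+2.
  rewrite -(cardsID [set y; g y] S) (setIidPr _) ?cards2 1?eq_sym ?gyy //.
  by rewrite subUset !sub1set Sy gS.
have -> : [set x in S | g x == x] = [set x in S' | g x == x].
  apply/setP => x; rewrite !inE; case: eqP => [gx|_]; rewrite ?andbF ?andbT //.
  case Sx: (x \in S); rewrite ?andbF ?andbT //; apply/esym/norP; split.
    by apply: contra gyy => /eqP <-; apply/eqP.
  by apply: contra gyy => /eqP xE; rewrite -xE -{1}(gK y) -xE gx.
rewrite cardS /= negbK; apply: IH; first by rewrite cardS ltnS in ltSn; exact: ltnW.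
move=> x; rewrite !inE !negb_or => /andP[/andP[xy xgy] Sx].
rewrite gS // andbT; apply/andP; split.
  by apply: contra xgy => /eqP <-; rewrite gK.
by apply: contra xy => /eqP gxE; rewrite -[y]gK -gxE gK.
Qed.

(** * Groups given by left axioms *)

Section LeftGroupLaws.
Variables (T : Type) (op : T -> T -> T) (inv : T -> T) (e : T).
Hypotheses (opA : associative op) (op1 : left_id e op)
  (opV : forall a, op (inv a) a = e).

Lemma lg_mulgV a : op a (inv a) = e.
Proof.
by rewrite -[LHS]op1 -(opV (inv a)) -opA (opA (inv a) a) opV op1 opV.
Qed.

Lemma lg_mulg1 : right_id e op.
Proof. by move=> a; rewrite -(opV a) opA lg_mulgV op1. Qed.

Lemma lg_mulKg a b : op (inv a) (op a b) = b.
Proof. by rewrite opA opV op1. Qed.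

Lemma lg_mulKVg a b : op a (op (inv a) b) = b.
Proof. by rewrite opA lg_mulgV op1. Qed.

Lemma lg_mulgI a : injective (op a).
Proof. by move=> b c h; rewrite -(lg_mulKg a b) h lg_mulKg. Qed.

Lemma lg_mulIg a : injective (op^~ a).
Proof.
by move=> b c /= h; rewrite -(lg_mulg1 b) -(lg_mulgV a) opA h -opA lg_mulgV lg_mulg1.
Qed.

Lemma lg_invg_uniq a b : op a b = e -> a = inv b.
Proof. by move=> h; apply: (@lg_mulIg b); rewrite /= opV. Qed.

Lemma lg_invgK : involutive inv.
Proof. by move=> a; apply/esym/lg_invg_uniq; rewrite lg_mulgV. Qed.

Lemma lg_invMg a b : inv (op a b) = op (inv b) (inv a).
Proof.
by apply/esym/lg_invg_uniq; rewrite -opA (opA (inv a)) opV op1 opV.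
Qed.

End LeftGroupLaws.

Arguments lg_mulgI {T op inv e} opA op1 opV a.
Arguments lg_mulIg {T op inv e} opA op1 opV a.

(** * The lambda-action of a skew brace *)

Section SkewBraceTheory.
Variables (T : finType) (B : skewBrace T).
Local Notation "a ⊕ b" := (sb_add B a b) (at level 50, left associativity).
Local Notation "⊖ a" := (sb_opp B a) (at level 35, right associativity).
Local Notation "a ⊙ b" := (sb_circ B a b) (at level 40, left associativity).
Local Notation z := (sb_zero B).
Local Notation lam := (sb_lambda B).
Local Notation F := (sb_Fix B).
Local Notation orbit := (lambda_orbit B).

Let addrA := sb_addA B.
Let add0r := sb_add0 B.
Let addNr := sb_addN B.
Let addrN := lg_mulgV addrA add0r addNr.
Let addr0 := lg_mulg1 addrA add0r addNr.
Let addKr := lg_mulKg addrA add0r addNr.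
Let addNKr := lg_mulKVg addrA add0r addNr.
Let addrI := lg_mulgI addrA add0r addNr.
Let addIr := lg_mulIg addrA add0r addNr.
Let oppr_uniq := lg_invg_uniq addrA add0r addNr.
Let opprK := lg_invgK addrA add0r addNr.
Let opprD_rev := lg_invMg addrA add0r addNr.
Let oppr0 : ⊖ z = z. Proof. by rewrite -[RHS](addNr z) addr0. Qed.

Lemma circr0 a : a ⊙ z = a.
Proof.
have : a ⊙ z ⊕ z = a ⊙ z ⊕ (⊖ a ⊕ a ⊙ z).
  by rewrite addr0 addrA -sb_dist add0r.
by move/addrI => h; rewrite -(addNKr a (a ⊙ z)) -h addr0.
Qed.

Lemma sb_one_zero : sb_one B = z.
Proof. by rewrite -(circr0 (sb_one B)) sb_circ1. Qed.

Lemma circE a b : a ⊙ b = a ⊕ lam a b.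
Proof. by rewrite /sb_lambda addNKr. Qed.

Lemma lambdaD a b c : lam a (b ⊕ c) = lam a b ⊕ lam a c.
Proof. by rewrite /sb_lambda sb_dist !addrA. Qed.

Lemma lambda0 a : lam a z = z.
Proof. by rewrite /sb_lambda circr0 addNr. Qed.

Lemma lambda1 b : lam z b = b.
Proof. by rewrite /sb_lambda -[X in X ⊙ b]sb_one_zero sb_circ1 oppr0 add0r. Qed.

Lemma lambdaM a b c : lam (a ⊙ b) c = lam a (lam b c).
Proof.
by rewrite [in LHS]/sb_lambda -sb_circA (circE b c) sb_dist -!addrA addKr.
Qed.

Lemma lambdaN a b : lam a (⊖ b) = ⊖ lam a b.
Proof. by apply: oppr_uniq; rewrite -lambdaD addNr lambda0. Qed.

Lemma lambdaK a b : lam (sb_cinv B a) (lam a b) = b.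
Proof. by rewrite -lambdaM sb_circV sb_one_zero lambda1. Qed.

Lemma FixP x : reflect (forall y, lam y x = x) (x \in F).
Proof. by rewrite inE; apply: (iffP forallP) => h y; apply/eqP. Qed.

Lemma lambda_kerP a : reflect (forall b, lam a b = b) (a \in sb_ker B).
Proof. by rewrite inE; apply: (iffP forallP) => h b; apply/eqP. Qed.

Lemma Fix0 : z \in F.
Proof. by apply/FixP => y; rewrite lambda0. Qed.

Lemma FixD x y : x \in F -> y \in F -> x ⊕ y \in F.
Proof. by move=> /FixP hx /FixP hy; apply/FixP => w; rewrite lambdaD hx hy. Qed.

Lemma FixN x : x \in F -> ⊖ x \in F.
Proof. by move=> /FixP hx; apply/FixP => w; rewrite lambdaN hx. Qed.

Lemma sgn_act_Fix k f : f \in F -> sgn_act (sb_opp B) k f \in F.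
Proof. by case: k => Ff; rewrite /sgn_act ?FixN. Qed.

Lemma FixDr x y : x \in F -> (y ⊕ x \in F) = (y \in F).
Proof.
move=> Fx; apply/idP/idP => [Fyx|Fy]; last exact: FixD.
by rewrite -(addr0 y) -(addrN x) addrA FixD ?FixN.
Qed.

Lemma FixDl x y : x \in F -> (x ⊕ y \in F) = (y \in F).
Proof.
move=> Fx; apply/idP/idP => [Fxy|Fy]; last exact: FixD.
by rewrite -(addKr x y) FixD ?FixN.
Qed.

Lemma circ_Fix x y : y \in F -> x ⊙ y = x ⊕ y.
Proof. by move=> /FixP Fy; rewrite circE Fy. Qed.

Lemma Fix_lambda x y : (lam x y \in F) = (y \in F).
Proof.
apply/idP/idP => [Fl|/FixP Fy]; last by rewrite Fy; apply/FixP.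
by move/FixP: (Fl) => /(_ (sb_cinv B x)); rewrite lambdaK => ->.
Qed.

Lemma mem_lambda_orbit a x : lam x a \in orbit a.
Proof. exact: imset_f. Qed.

Lemma lambda_orbit_id a : a \in orbit a.
Proof. by rewrite -[X in X \in _]lambda1 mem_lambda_orbit. Qed.

Lemma lambda_orbit_Fix a : a \in F -> orbit a = [set a].
Proof.
move=> /FixP Fa; apply/setP => b; rewrite inE.
by apply/imsetP/eqP => [[x _ ->]|->]; [rewrite Fa | exists z; rewrite ?lambda1].
Qed.

Lemma card_lambda_orbit_gt1 a : (1 < #|orbit a|) = (a \notin F).
Proof.
apply/idP/idP => [|nFa]; first by apply: contraL => /lambda_orbit_Fix ->; rewrite cards1.
have [x xa] : exists x, lam x a != a by apply/existsP; rewrite inE negb_forall in nFa.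
rewrite (cardsD1 a) lambda_orbit_id ltnS card_gt0; apply/set0Pn.
by exists (lam x a); rewrite !inE xa mem_lambda_orbit.
Qed.

Definition lambda_stab a := [set x | lam x a == a].

Lemma card_lambda_orbit_stab a : #|T| = #|orbit a| * #|lambda_stab a|.
Proof.
have circI := lg_mulgI (sb_circA B) (sb_circ1 B) (sb_circV B).
pose rep b := odflt z [pick x | lam x a == b].
have repP b : b \in orbit a -> lam (rep b) a = b.
  case/imsetP => x _ ->; rewrite /rep; case: pickP => [y /eqP // | /(_ x)].
  by rewrite eqxx.
rewrite -cardsX -cardsT; apply/eqP; rewrite eqn_leq; apply/andP; split.
  pose f x := (lam x a, sb_cinv B (rep (lam x a)) ⊙ x).
  have f_inj : injective f by move=> x y [ea]; rewrite ea => /circI.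
  rewrite -(card_imset _ f_inj); apply/subset_leq_card/subsetP => _ /imsetP[x _ ->].
  rewrite !inE /= mem_lambda_orbit lambdaM.
  have := repP _ (mem_lambda_orbit a x); set b := lam x a => rb.
  by rewrite -{2}rb lambdaK eqxx.
pose g p := rep p.1 ⊙ p.2.
have g_inj : {in setX (orbit a) (lambda_stab a) &, injective g}.
  move=> [b s] [b' s'] /setXP[/= ob sa] /setXP[/= ob' sa']; rewrite /g /= => gE.
  have bE : b = b'.
    move/(congr1 (lam^~ a)): gE; rewrite !lambdaM.
    by move: sa sa'; rewrite /= !inE => /eqP -> /eqP ->; rewrite !repP.
  by move: gE; rewrite bE => /circI ->.
by rewrite -(card_in_imset g_inj) subset_leq_card ?subsetT.
Qed.

(** * Skew braces whose graph Lambda has one vertex *)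

Section OneVertex.
Hypothesis one_vertex : #|Lambda_vertices B| = 1.
Hypothesis ker_Fix : sb_ker B :&: F = [set z].

Let vertexE b : b \notin F -> Lambda_vertices B = [set orbit b].
Proof.
move=> nFb; have /cards1P[O vE] : #|Lambda_vertices B| == 1 by rewrite one_vertex.
suff : orbit b \in Lambda_vertices B by rewrite vE => /set1P ->.
by rewrite inE imset_f ?card_lambda_orbit_gt1.
Qed.

Lemma exists_nonFix : exists a, a \notin F.
Proof.
apply/existsP; apply: contraT; rewrite negb_exists => /forallP/= allF.
suff LV0 : Lambda_vertices B = set0 by move: one_vertex; rewrite LV0 cards0.
apply/setP => O; rewrite !inE; apply/negbTE/andP => -[/imsetP[a _ ->]].
by rewrite card_lambda_orbit_gt1; apply/negP/allF.
Qed.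

Lemma lambda_orbit_nonFix a : a \notin F -> orbit a = ~: F.
Proof.
move=> nFa; apply/setP => b; rewrite inE; apply/idP/idP => [/imsetP[x _ ->]|nFb].
  by rewrite Fix_lambda.
have /set1P -> : orbit a \in [set orbit b] by rewrite -(vertexE nFb) (vertexE nFa) set11.
exact: lambda_orbit_id.
Qed.

Lemma card_Fix_setC : #|F| = #|~: F|.
Proof.
have [a nFa] := exists_nonFix.
have Fpos : 0 < #|F| by rewrite card_gt0; apply/set0Pn; exists z; exact: Fix0.
have : #|~: F| %| #|F| + #|~: F|.
  by rewrite cardsC (card_lambda_orbit_stab a) lambda_orbit_nonFix ?dvdn_mulr.
rewrite dvdn_addl // => /(dvdn_leq Fpos) le_CF; apply/eqP; rewrite eqn_leq le_CF andbT.
rewrite -(card_in_imset (in2W (@addrI a))); apply/subset_leq_card.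
by apply/subsetP => _ /imsetP[f Ff ->]; rewrite inE FixDr.
Qed.

Lemma Fix_coset a b : a \notin F -> b \notin F -> ⊖ a ⊕ b \in F.
Proof.
move=> nFa nFb.
have aFE : sb_add B a @: F = ~: F.
  apply/eqP; rewrite eqEcard -card_Fix_setC card_in_imset ?leqnn ?andbT.
    by apply/subsetP => _ /imsetP[f Ff ->]; rewrite inE FixDr.
  exact: in2W (@addrI a).
by move: nFb; rewrite -in_setC -aFE => /imsetP[f Ff ->]; rewrite addKr.
Qed.

Section Base.
Variable a : T.
Hypothesis nFa : a \notin F.

Definition lambda_shift x := ⊖ a ⊕ lam x a.
Local Notation σ := lambda_shift.

Lemma lambda_shift_Fix x : σ x \in F.
Proof. by rewrite Fix_coset ?Fix_lambda. Qed.

Lemma lambda_base x : lam x a = a ⊕ σ x.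
Proof. by rewrite addNKr. Qed.

Lemma lambda_baseD x f : f \in F -> lam x (a ⊕ f) = a ⊕ σ x ⊕ f.
Proof. by move=> /FixP Ff; rewrite lambdaD Ff lambda_base. Qed.

Lemma lambda_shiftM x y : σ (x ⊙ y) = σ x ⊕ σ y.
Proof.
rewrite {1}/lambda_shift lambdaM lambda_base lambda_baseD ?lambda_shift_Fix //.
by rewrite -addrA addKr.
Qed.

Lemma lambda_shiftDFix x f : f \in F -> σ (x ⊕ f) = σ x ⊕ σ f.
Proof. by move=> Ff; rewrite -circ_Fix // lambda_shiftM. Qed.

Lemma lambda_shift0 : σ z = z.
Proof. by rewrite /lambda_shift lambda1 addNr. Qed.

Lemma lambda_shiftN f : f \in F -> σ (⊖ f) = ⊖ σ f.
Proof.
move=> Ff; apply: oppr_uniq.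
by rewrite -lambda_shiftDFix ?FixN // addNr lambda_shift0.
Qed.

Lemma lambda_shift_surj f : f \in F -> exists x, σ x = f.
Proof.
move=> Ff; have : a ⊕ f \in orbit a by rewrite lambda_orbit_nonFix // inE FixDr.
by case/imsetP => x _ xE; exists x; rewrite /lambda_shift -xE addKr.
Qed.

Lemma nonFix_double_Fix : a ⊕ a \in F.
Proof.
apply: contraT => nFaa; have := Fix_coset nFa nFaa.
by rewrite addKr (negbTE nFa).
Qed.

Lemma add_nonFix_Fix f : f \in F -> a ⊕ f = ⊖ f ⊕ a.
Proof.
move=> Ff; have [x <-] := lambda_shift_surj Ff.
move/FixP: nonFix_double_Fix => /(_ x); rewrite lambdaD lambda_base -addrA.
by move/addrI => aE; rewrite -{2}aE addKr.
Qed.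

Lemma Fix_addC f g : f \in F -> g \in F -> f ⊕ g = g ⊕ f.
Proof.
move=> Ff Fg; have : ⊖ (f ⊕ g) ⊕ a = ⊖ (g ⊕ f) ⊕ a.
  rewrite -add_nonFix_Fix ?FixD // addrA add_nonFix_Fix // -addrA.
  by rewrite add_nonFix_Fix // addrA opprD_rev.
by move/(@addIr a)/(congr1 (sb_opp B)); rewrite !opprK.
Qed.

Lemma lambda_shift_shift x : x \in F -> σ (σ x) = σ x ⊕ σ x.
Proof.
move=> Fx; have Fsx := lambda_shift_Fix x.
have xaE : x ⊙ a = a ⊙ (⊖ x ⊕ σ x).
  rewrite circE lambda_base addrA -[x in x ⊕ a]opprK -add_nonFix_Fix ?FixN //.
  by rewrite -addrA circ_Fix // FixD ?FixN.
move/(congr1 σ): xaE; rewrite !lambda_shiftM lambda_shiftDFix ?FixN // lambda_shiftN //.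
rewrite Fix_addC ?lambda_shift_Fix // => /addrI sxE.
by rewrite {3}sxE addNKr.
Qed.

Lemma lambda_shift_eq0 x : x \in F -> σ x = z -> x = z.
Proof.
move=> Fx sx0; apply/set1P; rewrite -ker_Fix inE Fx andbT inE.
apply/forallP => b; apply/eqP; have [/FixP //|nFb] := boolP (b \in F).
by rewrite -(addNKr a b) lambda_baseD ?Fix_coset // sx0 addr0.
Qed.

Lemma lambda_shift_Fix_inj : {in F &, injective σ}.
Proof.
move=> x y Fx Fy sxy; apply: (@addIr (⊖ y)); rewrite /= addrN.
apply: lambda_shift_eq0; first by rewrite FixD ?FixN.
by rewrite lambda_shiftDFix ?FixN // lambda_shiftN // sxy addrN.
Qed.

Lemma lambda_shift_imset : σ @: F = F.
Proof.
apply/eqP; rewrite eqEcard card_in_imset ?leqnn ?andbT; last exact: lambda_shift_Fix_inj.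
by apply/subsetP => _ /imsetP[x _ ->]; exact: lambda_shift_Fix.
Qed.

Lemma lambda_shift_double y : y \in F -> σ y = y ⊕ y.
Proof.
by rewrite -{1}lambda_shift_imset => /imsetP[x Fx ->]; rewrite lambda_shift_shift.
Qed.

Lemma Fix_double_eq0 y : y \in F -> y ⊕ y = z -> y = z.
Proof. by move=> Fy yy0; apply: lambda_shift_eq0; rewrite ?lambda_shift_double. Qed.

Lemma nonFix_double_eq0 : a ⊕ a = z.
Proof.
apply: Fix_double_eq0; first exact: nonFix_double_Fix.
have := add_nonFix_Fix nonFix_double_Fix; rewrite addrA.
by move/addIr => aaE; rewrite {1}aaE addNr.
Qed.

End Base.

Lemma odd_card_Fix : odd #|F|.
Proof.
have [a nFa] := exists_nonFix.
rewrite (odd_card_involution opprK); last by move=> x /FixN.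
suff -> : [set x in F | ⊖ x == x] = [set z] by rewrite cards1.
apply/setP => x; rewrite inE in_set1; apply/andP/eqP => [[Fx /eqP xE]|->].
  by apply: (Fix_double_eq0 nFa Fx); rewrite -{1}xE addNr.
by rewrite Fix0 oppr0.
Qed.

Lemma nonFix_opp x : x \notin F -> ⊖ x = x.
Proof. by move=> nFx; apply/esym/oppr_uniq/nonFix_double_eq0. Qed.

Lemma exists_lambda_fixed_nonFix : exists2 e, e \notin F & lam e e = e.
Proof.
have [a nFa] := exists_nonFix.
have : ⊖ lambda_shift a a \in lambda_shift a @: F.
  by rewrite lambda_shift_imset // FixN ?lambda_shift_Fix.
case/imsetP => g Fg sgE; exists (a ⊕ g); first by rewrite FixDr.
by rewrite lambda_baseD // lambda_shiftDFix // -sgE addrN addr0.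
Qed.

Section Coordinates.
Variable e : T.
Hypotheses (nFe : e \notin F) (lambda_ee : lam e e = e).

Definition sd_uncoord (p : T * bool) := if p.2 then p.1 ⊕ e else p.1.
Definition sd_coord x := if x \in F then (x, false) else (x ⊕ e, true).

Let addee : e ⊕ e = z := nonFix_double_eq0 nFe.
Let conj_e := add_nonFix_Fix nFe.

Lemma circ_ee : e ⊙ e = z.
Proof. by rewrite circE lambda_ee addee. Qed.

Lemma circ_Fix_e f : f \in F -> f ⊙ e = ⊖ f ⊕ e.
Proof.
move=> Ff; rewrite circE lambda_base lambda_shift_double // conj_e ?FixD //.
by rewrite opprD_rev !addrA addrN add0r.
Qed.

Lemma addFe_circ f : f \in F -> f ⊕ e = e ⊙ ⊖ f.
Proof. by move=> Ff; rewrite circ_Fix ?FixN // conj_e ?FixN // opprK. Qed.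

Lemma sd_coord_Fix x : (sd_coord x).1 \in F.
Proof.
rewrite /sd_coord; case: ifP => [//|/negbT nFx].
by rewrite -(nonFix_opp nFx) Fix_coset.
Qed.

Lemma sd_coordK : cancel sd_coord sd_uncoord.
Proof.
by move=> x; rewrite /sd_coord; case: ifP => _; rewrite /sd_uncoord //= -addrA addee addr0.
Qed.

Lemma sd_uncoordK p : p.1 \in F -> sd_coord (sd_uncoord p) = p.
Proof.
case: p => f [] /= Ff; rewrite /sd_coord ?Ff //.
by rewrite FixDl // (negbTE nFe) -addrA addee addr0.
Qed.

Lemma sd_uncoord_add p q : p.1 \in F -> q.1 \in F ->
  sd_uncoord (sd_add (sb_add B) (sb_opp B) p q) = sd_uncoord p ⊕ sd_uncoord q.
Proof.
case: p q => [f []] [g []] /= Ff Fg; rewrite /sd_add /sd_uncoord /sgn_act //=.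
- by rewrite -addrA (addrA e) conj_e // -addrA addee addr0.
- by rewrite -!addrA conj_e.
Qed.

Lemma sd_uncoord_circ p q : p.1 \in F -> q.1 \in F ->
  sd_uncoord (sd_circ (sb_add B) (sb_opp B) p q) = sd_uncoord p ⊙ sd_uncoord q.
Proof.
case: p q => [f []] [g []] /= Ff Fg; rewrite /sd_circ /sd_uncoord /sgn_act /=.
- rewrite (addFe_circ Fg) -[f in f ⊕ e]opprK -circ_Fix_e ?FixN //.
  by rewrite -sb_circA (sb_circA B e) circ_ee -sb_one_zero sb_circ1 circ_Fix ?FixN.
- by rewrite circ_Fix // -!addrA conj_e.
- rewrite (addFe_circ Fg) sb_circA circ_Fix_e // circ_Fix ?FixN //.
  by rewrite -!addrA conj_e ?FixN // opprK.
- by rewrite circ_Fix.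
Qed.

Lemma sd_coord_add x y :
  sd_coord (x ⊕ y) = sd_add (sb_add B) (sb_opp B) (sd_coord x) (sd_coord y).
Proof.
rewrite -{1}(sd_coordK x) -{1}(sd_coordK y) -sd_uncoord_add ?sd_coord_Fix //.
by rewrite sd_uncoordK //= FixD ?sgn_act_Fix ?sd_coord_Fix.
Qed.

Lemma sd_coord_circ x y :
  sd_coord (x ⊙ y) = sd_circ (sb_add B) (sb_opp B) (sd_coord x) (sd_coord y).
Proof.
rewrite -{1}(sd_coordK x) -{1}(sd_coordK y) -sd_uncoord_circ ?sd_coord_Fix //.
by rewrite sd_uncoordK //= FixD ?sgn_act_Fix ?sd_coord_Fix.
Qed.

Lemma sd_coord_imset : sd_coord @: [set: T] = [set p : T * bool | p.1 \in F].
Proof.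
apply/setP => p; rewrite inE; apply/imsetP/idP => [[x _ ->]|Fp].
  exact: sd_coord_Fix.
by exists (sd_uncoord p); rewrite ?sd_uncoordK.
Qed.

End Coordinates.

End OneVertex.
End SkewBraceTheory.

(** * The skew brace on F x Z/2Z *)

Section SemidirectModel.
Local Open Scope ring_scope.
Variable F : finZmodType.
Local Notation add := (sd_add (@GRing.add F) (@GRing.opp F)).
Local Notation circ := (sd_circ (@GRing.add F) (@GRing.opp F)).
Local Notation sgn := (sgn_act (@GRing.opp F)).

Definition sd_opp (p : F * bool) : F * bool := (- sgn p.2 p.1, p.2).
Definition sd_cinv (p : F * bool) : F * bool := (- p.1, p.2).

Definition zlin3 (x y w : F) (c : int * int * int) : F :=
  x *~ c.1.1 + y *~ c.1.2 + w *~ c.2.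

Lemma zlin3D x y w c d : zlin3 x y w c + zlin3 x y w d = zlin3 x y w (c + d).
Proof. by rewrite /zlin3 /= !mulrzDr addrACA; congr (_ + _); rewrite addrACA. Qed.

Lemma zlin3N x y w c : - zlin3 x y w c = zlin3 x y w (- c).
Proof. by rewrite /zlin3 /= !mulrNz !opprD. Qed.

Lemma zlin3_1 x y w : zlin3 x y w (1, 0, 0) = x.
Proof. by rewrite /zlin3 /= !mulr0z !addr0. Qed.

Lemma zlin3_2 x y w : zlin3 x y w (0, 1, 0) = y.
Proof. by rewrite /zlin3 /= !mulr0z add0r addr0. Qed.

Lemma zlin3_3 x y w : zlin3 x y w (0, 0, 1) = w.
Proof. by rewrite /zlin3 /= !mulr0z !add0r. Qed.

(* Proves an identity between sums of [x], [y], [w] and their opposites by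
   rewriting both sides as [zlin3 x y w c] and comparing the integer
   coefficient vectors [c]; with only two variables, pass one of them twice. *)
Ltac zmod_lin3 x y w :=
  let f := fresh "f" in pose f := zlin3 x y w;
  try rewrite -[x](zlin3_1 x y w) -/f; try rewrite -[y](zlin3_2 x y w) -/f;
  try rewrite -[w](zlin3_3 x y w);
  rewrite /f; repeat (rewrite zlin3N || rewrite zlin3D); congr (zlin3 _ _ _ _).

Ltac sd_unfold := rewrite /sd_add /sd_circ /sd_opp /sd_cinv /sgn_act /=; congr pair.

Lemma sd_addA a b c : add a (add b c) = add (add a b) c.
Proof.
move: a b c => [x []] [y []] [w []]; sd_unfold; zmod_lin3 x y w.
Qed.

Lemma sd_add0 a : add (0, false) a = a.
Proof. by case: a => [x k]; sd_unfold; rewrite add0r. Qed.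

Lemma sd_addN a : add (sd_opp a) a = (0, false).
Proof. by case: a => [x []]; sd_unfold; rewrite ?opprK ?addrN ?addNr. Qed.

Lemma sd_circA a b c : circ a (circ b c) = circ (circ a b) c.
Proof.
move: a b c => [x []] [y []] [w []]; sd_unfold; zmod_lin3 x y w.
Qed.

Lemma sd_circ1 a : circ (0, false) a = a.
Proof. by case: a => [x []]; sd_unfold; rewrite ?oppr0 add0r. Qed.

Lemma sd_circV a : circ (sd_cinv a) a = (0, false).
Proof. by case: a => [x []]; sd_unfold; rewrite ?opprK ?addrN ?addNr. Qed.

Lemma sd_dist a b c : circ a (add b c) = add (add (circ a b) (sd_opp a)) (circ a c).
Proof.
move: a b c => [x []] [y []] [w []]; sd_unfold; zmod_lin3 x y w.
Qed.

Definition sd_brace : skewBrace (F * bool) :=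
  SkewBrace sd_addA sd_add0 sd_addN sd_circA sd_circ1 sd_circV sd_dist.

Lemma sd_lambda_even a x : sb_lambda sd_brace a (x, false) = (x, false).
Proof. by case: a => [y []]; rewrite /sb_lambda /=; sd_unfold; zmod_lin3 x y x. Qed.

Lemma sd_lambda_odd y k x : sb_lambda sd_brace (y, k) (x, true)
  = (if k then x + (y + y) else x - (y + y), true).
Proof. by case: k; rewrite /sb_lambda /=; sd_unfold; zmod_lin3 x y x. Qed.

Hypotheses (F_gt1 : (1 < #|F|)%N) (F_odd : odd #|F|).

Lemma zmod_double_eq0 (x : F) : x + x = 0 -> x = 0.
Proof.
move=> xx0; have := expg_cardG (in_setT x); rewrite FinRing.zmodXgE cardsT.
rewrite -[#|F|]odd_double_half F_odd -mul2n mulrS mulrnA mulr2n xx0 mul0rn addr0.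
by move=> ->.
Qed.

Lemma zmod_double_inj : injective (fun x : F => x + x).
Proof.
move=> x y /= xyE; apply/eqP; rewrite -subr_eq0; apply/eqP/zmod_double_eq0.
by rewrite addrACA xyE -opprD addrN.
Qed.

Lemma exists_nonzero : exists x : F, x != 0.
Proof.
apply/existsP; apply: contraLR F_gt1 => /existsPn all0; rewrite -leqNgt.
apply/fintype_le1P => x y.
by move: (all0 x) (all0 y); rewrite !negbK => /eqP -> /eqP ->.
Qed.

Lemma sd_brace_Fix : sb_Fix sd_brace = [set p : F * bool | p.2 == false].
Proof.
apply/setP => [[x []]]; rewrite [in RHS]inE /=; last first.
  by apply/FixP => a; rewrite sd_lambda_even.
have [y y_neq0] := exists_nonzero.
apply/negbTE/FixP => /(_ (y, false)); rewrite sd_lambda_odd => -[/eqP].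
rewrite -subr_eq0 addrAC subrr add0r oppr_eq0 => /eqP/zmod_double_eq0 y0.
by rewrite y0 eqxx in y_neq0.
Qed.

Lemma sd_brace_ker : sb_ker sd_brace = [set p : F * bool | p.1 == 0].
Proof.
apply/setP => [[y k]]; rewrite [in RHS]inE /=; apply/lambda_kerP/eqP => [|-> [x []]].
- move/(_ (0, true)); rewrite sd_lambda_odd => -[].
  by case: k => /eqP; rewrite ?add0r ?sub0r ?oppr_eq0 => /eqP/zmod_double_eq0.
- by rewrite sd_lambda_odd addr0; case: k; rewrite ?addr0 ?subr0.
- by rewrite sd_lambda_even.
Qed.

Lemma sd_lambda_orbit_odd x :
  lambda_orbit sd_brace (x, true) = [set p : F * bool | p.2].
Proof.
apply/setP => [[y k]]; rewrite inE /=; apply/imsetP/idP => [[[? ?] _]|->{k}].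
  by rewrite sd_lambda_odd => -[_ ->].
have [half _ halfK] := injF_bij zmod_double_inj.
have hE : half (x - y) + half (x - y) = x - y by apply: halfK.
by exists (half (x - y), false); rewrite // sd_lambda_odd hE opprB addrC subrK.
Qed.

Lemma sd_brace_vertices :
  Lambda_vertices sd_brace = [set [set p : F * bool | p.2]].
Proof.
apply/setP => O; rewrite !inE; apply/andP/eqP => [[/imsetP[p _ ->]]|->].
  rewrite card_lambda_orbit_gt1 sd_brace_Fix inE.
  by case: p => x [] //= _; exact: sd_lambda_orbit_odd.
split; first by apply/imsetP; exists (0, true); rewrite ?sd_lambda_orbit_odd.
by rewrite -(sd_lambda_orbit_odd 0) card_lambda_orbit_gt1 sd_brace_Fix inE.
Qed.

End SemidirectModel.

Theorem mainTheorem14 :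
  (forall (T : finType) (B : skewBrace T),
    #|Lambda_vertices B| = 1 ->
    sb_ker B :&: sb_Fix B = [set sb_zero B] ->
    [/\ (* (Fix(A),+) is a subgroup of (A,+), abelian, of odd order *)
        [/\ sb_zero B \in sb_Fix B,
        {in sb_Fix B &, forall x y, sb_add B x y \in sb_Fix B},
        {in sb_Fix B, forall x, sb_opp B x \in sb_Fix B} &
        {in sb_Fix B &, forall x y, sb_add B x y = sb_add B y x}],
        odd #|sb_Fix B|,
        (* Fix(A) is a trivial skew brace *)
        {in sb_Fix B &, forall x y, sb_add B x y = sb_circ B x y} &
        (* A is isomorphic to the skew brace on Fix(A) x Z/2Z *)
        exists phi : T -> T * bool,
          [/\ injective phi,
              phi @: [set: T] = [set p : T * bool | p.1 \in sb_Fix B],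
              forall a b, phi (sb_add B a b)
                          = sd_add (sb_add B) (sb_opp B) (phi a) (phi b) &
              forall a b, phi (sb_circ B a b)
                          = sd_circ (sb_add B) (sb_opp B) (phi a) (phi b)]])
  /\
  (forall (F : finZmodType),
    1 < #|F| -> odd #|F| ->
    exists B : skewBrace (F * bool),
      [/\ sb_add B = sd_add (@GRing.add F) (@GRing.opp F),
          sb_circ B = sd_circ (@GRing.add F) (@GRing.opp F),
          sb_Fix B = [set p : F * bool | p.2 == false],
          sb_ker B = [set p : F * bool | p.1 == 0%R] &
          #|Lambda_vertices B| = 1]).
Proof.
split=> [T B one_vertex ker_Fix | F F_gt1 F_odd].
  have [a nFa] := exists_nonFix one_vertex.
  have [e nFe lambda_ee] := exists_lambda_fixed_nonFix one_vertex ker_Fix.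
  split.
  - split=> [|x y|x|x y Fx Fy]; [exact: Fix0 | exact: FixD | exact: FixN |].
    exact: (Fix_addC one_vertex nFa Fx Fy).
  - exact: odd_card_Fix one_vertex ker_Fix.
  - by move=> x y _ Fy; rewrite circ_Fix.
  exists (sd_coord B e); split.
  - exact: can_inj (sd_coordK one_vertex ker_Fix nFe).
  - exact: (sd_coord_imset one_vertex ker_Fix nFe).
  - exact: (sd_coord_add one_vertex ker_Fix nFe).
  - exact: (sd_coord_circ one_vertex ker_Fix nFe lambda_ee).
exists (sd_brace F); split => //.
- exact: sd_brace_Fix.
- exact: sd_brace_ker.
- by rewrite sd_brace_vertices // cards1.
Qed.
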